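(* Let $\Omega\subset\mathbb R^d$ be a bounded Borel set, $f:\Omega\to[0,\infty)$ bounded with $\int_\Omega f=1$, $p\ge1$, $x_1,x_2\in\Omega$, and $h_1,h_2:[0,1]\to[0,\infty)$ non-decreasing and Lipschitz continuous. Let $(\rho_j)_{j\ge1}$ be a sequence in $(0,1)$ with $\rho_j\to1$ and $\sum_{j\ge1}(1-\rho_j)=+\infty$. For any Borel $\psi_0:\Omega\to[0,1]$ define recursively: $m_j=\int_\Omega(1-\psi_j)f\,dx$, $t_{j+1}=h_2(1-m_j)-h_1(m_j)$, and $$\psi_{j+1}(x)=\begin{cases}\rho_j\,\psi_j(x)&\text{if }\tau(x)<t_{j+1},\\ 1-\rho_j(1-\psi_j(x))&\text{otherwise.}\end{cases}$$ Then $\psi_j\to\bar\psi$ uniformly on every compact subset of $\Omega\setminus\{\tau=\bar t\}$.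
   Context: $\tau(x)=|x-x_1|^p-|x-x_2|^p$, $m(t)=\int_{\{x\in\Omega:\tau(x)<t\}}f\,dx$, $G(t)=h_2(1-m(t))-h_1(m(t))$. There is a unique $\bar t$ with $G(\bar t)=\bar t$, and $\bar\psi(x)=0$ if $\tau(x)<\bar t$, $\bar\psi(x)=1$ if $\tau(x)>\bar t$ (the unique equilibrium). *)

From HB Require Import structures.
From mathcomp Require Import all_boot all_order all_algebra.
From mathcomp Require Import all_classical all_reals all_analysis.
Set Implicit Arguments. Unset Strict Implicit. Unset Printing Implicit Defensive.
Import Order.TTheory GRing.Theory Num.Theory.
Import numFieldNormedType.Exports.
Local Open Scope classical_set_scope.
Local Open Scope ring_scope.

(* R^d is modelled as row vectors 'rV[R]_d (with the product = Euclidean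
   topology); Rd R d is the same carrier equipped with the Borel sigma-algebra
   (the sigma-algebra generated by the open sets). *)
Definition Rd (R : realType) (d : nat) :=
  g_sigma_algebraType (@open 'rV[R]_d).

(* The d-dimensional Lebesgue measure (on Borel sets) is characterized as the
   measure giving every open box its volume; such a measure exists and is
   unique on the Borel sigma-algebra. *)
Definition open_box (R : realType) (d : nat) (a b : 'rV[R]_d) : set (Rd R d) :=
  [set x | forall i : 'I_d, a ord0 i < x ord0 i < b ord0 i].

Definition is_lebesgue (R : realType) (d : nat)
    (lam : {measure set (Rd R d) -> \bar R}) : Prop :=
  forall a b : 'rV[R]_d, (forall i, a ord0 i <= b ord0 i) ->
    lam (open_box a b) = (\prod_(i < d) (b ord0 i - a ord0 i))%:E.

Definition edist (R : realType) (d : nat) (x y : 'rV[R]_d) : R :=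
  Num.sqrt (\sum_(i < d) (x ord0 i - y ord0 i) ^+ 2).

Definition tau (R : realType) (d : nat) (p : R) (x1 x2 : 'rV[R]_d)
    (x : 'rV[R]_d) : R :=
  edist x x1 `^ p - edist x x2 `^ p.

Definition mfun (R : realType) (d : nat) (lam : {measure set (Rd R d) -> \bar R})
    (Om : set (Rd R d)) (f : Rd R d -> R) (p : R) (x1 x2 : 'rV[R]_d) (t : R) : R :=
  Rintegral lam (Om `&` [set x | tau p x1 x2 x < t]) f.

Definition Gfun (R : realType) (d : nat) (lam : {measure set (Rd R d) -> \bar R})
    (Om : set (Rd R d)) (f : Rd R d -> R) (p : R) (x1 x2 : 'rV[R]_d)
    (h1 h2 : R -> R) (t : R) : R :=
  h2 (1 - mfun lam Om f p x1 x2 t) - h1 (mfun lam Om f p x1 x2 t).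

(* the equilibrium psibar (its value on {tau = tbar} is irrelevant) *)
Definition psibar (R : realType) (d : nat) (p : R) (x1 x2 : 'rV[R]_d)
    (tbar : R) (x : 'rV[R]_d) : R :=
  if tau p x1 x2 x < tbar then 0 else 1.

Fixpoint psi_seq (R : realType) (d : nat) (lam : {measure set (Rd R d) -> \bar R})
    (Om : set (Rd R d)) (f : Rd R d -> R) (p : R) (x1 x2 : 'rV[R]_d)
    (h1 h2 : R -> R) (rho : nat -> R) (psi0 : Rd R d -> R) (n : nat)
    : Rd R d -> R :=
  match n with
  | 0 => psi0
  | j.+1 =>
      let psij := psi_seq lam Om f p x1 x2 h1 h2 rho psi0 j in
      let mj := Rintegral lam Om (fun x => (1 - psij x) * f x) in
      let tj1 := h2 (1 - mj) - h1 mj in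
      fun x => if tau p x1 x2 x < tj1 then rho j * psij x
               else 1 - rho j * (1 - psij x)
  end.

From Pilot Require Import Defs.
From HB Require Import structures.
From mathcomp Require Import all_boot all_order all_algebra.
From mathcomp Require Import all_classical all_reals all_analysis measurable_realfun.
From mathcomp Require Import ring lra.
Set Implicit Arguments. Unset Strict Implicit. Unset Printing Implicit Defensive.
Import Order.TTheory GRing.Theory Num.Theory.
Import numFieldNormedType.Exports.
Local Open Scope classical_set_scope.
Local Open Scope ring_scope.

(* The masses m_j = int (1 - psi_j) f obey the relaxation
   m_{j+1} = rho_j m_j + (1 - rho_j) g(m_j) with g = m o threshold, where
   threshold s = h2(1 - s) - h1(s).  As m is nondecreasing and the threshold is
   nonincreasing, g is nonincreasing with fixed point m(tbar), so m_j - m(tbar)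
   and g(m_j) - m(tbar) have opposite signs and
   |m_{j+1} - m(tbar)| <= max (rho_j |m_j - m(tbar)|) (1 - rho_j).
   Divergence of sum (1 - rho_j) forces the products of the rho_j to 0, because
   prod rho_i * (1 + sum (1 - rho_i)) <= 1; hence m_j -> m(tbar) and, the
   threshold being Lipschitz, t_j -> tbar.  On a compact K avoiding
   {tau = tbar} we have |tau - tbar| >= del > 0, so once |t_j - tbar| < del
   every x in K lies on the same side of t_j as of tbar and
   |psi_{j+1}(x) - psibar(x)| = rho_j |psi_j(x) - psibar(x)|, which tends to 0
   uniformly on K by the same product estimate. *)

Lemma normr_mix_le (R : realDomainType) (r a b : R) : 0 <= r <= 1 -> a * b <= 0 ->
  `|r * a + (1 - r) * b| <= Num.max (r * `|a|) ((1 - r) * `|b|).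
Proof.
move=> /andP[r0 r1] ab.
have Ma : r * `|a| <= Num.max (r * `|a|) ((1 - r) * `|b|) by rewrite le_max lexx.
have Mb : (1 - r) * `|b| <= Num.max (r * `|a|) ((1 - r) * `|b|) by rewrite le_max lexx orbT.
move: Ma Mb; set M := Num.max _ _ => Ma Mb.
have [a0|a0|->] := ltgtP a 0;
  last by rewrite mulr0 add0r normrM (@ger0_norm _ (1 - r)) ?subr_ge0.
- have b0 : 0 <= b by nra.
  rewrite ltr0_norm // ger0_norm // in Ma Mb; rewrite ler_norml; apply/andP; split; nra.
- have b0 : b <= 0 by nra.
  rewrite gtr0_norm // ler0_norm // in Ma Mb; rewrite ler_norml; apply/andP; split; nra.
Qed.

Lemma same_side_lt (R : realDomainType) (y t c del : R) :
  `|t - c| < del -> del <= `|y - c| -> (y < t) = (y < c).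
Proof.
rewrite ltr_norml => /andP[tl tu].
have [yc|cy] := ltP y c.
  by rewrite ltr0_norm ?subr_lt0 // => yd; apply/idP; lra.
by rewrite ger0_norm ?subr_ge0 // => yd; apply/negbTE; rewrite -leNgt; lra.
Qed.

Lemma lipschitz_cvg_in01 (R : realType) (phi : R -> R) (L : R) (m : nat -> R) (ms : R) :
  (forall s t, 0 <= s <= 1 -> 0 <= t <= 1 -> `|phi s - phi t| <= L * `|s - t|) ->
  (forall j, 0 <= m j <= 1) -> 0 <= ms <= 1 -> m @ \oo --> ms ->
  phi \o m @ \oo --> phi ms.
Proof.
move=> phiL m01 ms01 /cvgrPdist_lt mcvg; apply/cvgrPdist_lt => e e0.
have L1 : 0 < `|L| + 1 by rewrite ltr_pwDr.
have := mcvg _ (divr_gt0 e0 L1); apply: filterS => j /= hj.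
rewrite distrC; apply: le_lt_trans (phiL _ _ (m01 j) ms01) _.
rewrite distrC in hj; have := normr_ge0 (m j - ms).
rewrite ltr_pdivlMr // in hj; have := ler_norm L; nra.
Qed.

Section RelaxationWeights.
Variables (R : realType) (rho : nat -> R).
Hypothesis rho01 : forall j, 0 <= rho j <= 1.

Lemma prod_mul_1Dsum_le1 N k :
  (\prod_(N <= i < k) rho i) * (1 + \sum_(N <= i < k) (1 - rho i)) <= 1.
Proof.
elim: k => [|k IH]; first by rewrite !big_geq // addr0 mulr1.
have [kN|Nk] := ltnP k N; first by rewrite !big_geq // addr0 mulr1.
rewrite big_nat_recr //= big_nat_recr //=.
set P := \prod_(N <= i < k) rho i in IH *.
set S := \sum_(N <= i < k) (1 - rho i) in IH *.
have P0 : 0 <= P by apply: prodr_ge0 => i _; case/andP: (rho01 i).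
have S0 : 0 <= S by apply: sumr_ge0 => i _; case/andP: (rho01 i); lra.
have /andP[r0 r1] := rho01 k.
(* (1 + S) - rho (2 + S - rho) = (1 - rho) (1 - rho + S) *)
have : 0 <= P * ((1 - rho k) * (1 - rho k + S)) by rewrite !mulr_ge0 //; lra.
lra.
Qed.

Lemma contraction_le_max_prod (a : nat -> R) (e : R) N :
  0 <= e -> a N <= 1 ->
  (forall j, (N <= j)%N -> a j.+1 <= Num.max e (rho j * a j)) ->
  forall k, (N <= k)%N -> a k <= Num.max e (\prod_(N <= i < k) rho i).
Proof.
move=> e0 aN ha; elim=> [|k IH].
  by rewrite leqn0 => /eqP<-; rewrite big_geq // le_max aN orbT.
rewrite leq_eqVlt => /orP[/eqP<-|Nk]; first by rewrite big_geq // le_max aN orbT.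
have {}IH := IH Nk.
apply: le_trans (ha k Nk) _.
rewrite big_nat_recr //= ge_max le_max lexx /= le_max.
have /andP[r0 r1] := rho01 k.
move: IH; rewrite le_max => /orP[ake|akP]; apply/orP; [left|right]; nra.
Qed.

Hypothesis rho_div : (\sum_(0 <= j <oo) (1 - rho j)%:E = +oo)%E.

Lemma tail_sum_cvgey N :
  ((fun k => \sum_(N <= i < k) (1 - rho i)%:E) @ \oo --> +oo)%E.
Proof.
have ge0 i : (0 <= (1 - rho i)%:E)%E by rewrite lee_fin; case/andP: (rho01 i); lra.
have := is_cvg_nneseries (P := xpredT) (N := N) (fun k _ _ => ge0 k).
suff -> : (\sum_(N <= i <oo) (1 - rho i)%:E = +oo)%E by [].
move: rho_div; rewrite (nneseries_split 0 N) ?add0n ?sumEFin //.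
by case: (\big[_/_]_(N <= k <oo) _).
Qed.

Lemma prod_cvg0 N : (fun k => \prod_(N <= i < k) rho i) @ \oo --> 0.
Proof.
apply/cvgrPdist_lt => e e0; near=> k.
set S := \sum_(N <= i < k) (1 - rho i).
have Se : e^-1 <= S.
  rewrite -lee_fin /S -sumEFin; near: k; exact: (cvgey_ge (tail_sum_cvgey N)).
have P0 : 0 <= \prod_(N <= i < k) rho i.
  by apply: prodr_ge0 => i _; case/andP: (rho01 i).
rewrite sub0r normrN ger0_norm //.
have := prod_mul_1Dsum_le1 N k; rewrite -/S.
have : 1 <= S * e by rewrite -ler_pdivrMr // div1r.
nra.
Unshelve. all: by end_near.
Qed.

Lemma contraction_eventually_lt N e : 0 < e ->
  \forall k \near \oo, forall a : nat -> R, a N <= 1 ->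
    (forall j, (N <= j)%N -> a j.+1 <= Num.max (e / 2) (rho j * a j)) -> a k < e.
Proof.
move=> e0; near=> k => a aN ha.
have Nk : (N <= k)%N by near: k; exact: nbhs_infty_ge.
have Pk : \prod_(N <= i < k) rho i < e.
  near: k; have /cvgrPdist_lt /(_ e e0) := prod_cvg0 N.
  by apply: filterS => j; rewrite sub0r normrN; apply: le_lt_trans; exact: ler_norm.
have e20 : 0 <= e / 2 by lra.
apply: (le_lt_trans (@contraction_le_max_prod a (e / 2) N e20 aN ha k Nk)).
by rewrite gt_max Pk andbT; lra.
Unshelve. all: by end_near.
Qed.

Hypothesis rho_cvg : rho @ \oo --> (1 : R).

Lemma relaxation_cvg (g : R -> R) (m : nat -> R) (ms : R) :
  (forall x, 0 <= x <= 1 -> 0 <= g x <= 1) ->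
  (forall x y, 0 <= x -> x <= y -> y <= 1 -> g y <= g x) ->
  0 <= ms <= 1 -> g ms = ms -> (forall j, 0 <= m j <= 1) ->
  (forall j, m j.+1 = rho j * m j + (1 - rho j) * g (m j)) ->
  m @ \oo --> ms.
Proof.
move=> g01 g_anti /andP[ms0 ms1] gms m01 mS.
apply/cvgrPdist_lt => e e0.
have [N _ rhoN] : \forall j \near \oo, 1 - rho j < e / 2.
  have e20 : 0 < e / 2 by lra.
  have /cvgrPdist_lt /(_ _ e20) := rho_cvg.
  by apply: filterS => // j; apply: le_lt_trans; exact: ler_norm.
have := contraction_eventually_lt N e0.
apply: filterS => k /(_ (fun j => `|ms - m j|)); apply.
  by have /andP[? ?] := m01 N; rewrite ler_norml; apply/andP; split; lra.
move=> j Nj; have /andP[r0 r1] := rho01 j.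
have /andP[mj0 mj1] := m01 j; have /andP[gj0 gj1] := g01 _ (m01 j).
have -> : ms - m j.+1 = rho j * (ms - m j) + (1 - rho j) * (ms - g (m j)).
  by rewrite mS; ring.
apply: le_trans (normr_mix_le _ _) _; first by rewrite r0 r1.
  have [mjs|smj] := leP (m j) ms.
    have : g ms <= g (m j) by apply: g_anti.
    by rewrite gms => gs; apply: mulr_ge0_le0; lra.
  have : g (m j) <= g ms by apply: g_anti => //; exact: ltW.
  by rewrite gms => gs; apply: mulr_le0_ge0; lra.
rewrite ge_max !le_max lexx orbT /=; apply/orP; left.
have : `|ms - g (m j)| <= 1 by rewrite ler_norml; apply/andP; split; lra.
have := rhoN j Nj; nra.
Qed.

End RelaxationWeights.

Lemma continuous_normr_powR (R : realType) (p : R) : 1 <= p ->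
  continuous (fun a : R => `|a| `^ p).
Proof.
move=> p1 a; have p0 : p != 0 by rewrite gt_eqF // (lt_le_trans ltr01 p1).
have [->|a0] := eqVneq a 0.
  (* at 0 use [|y| `^ p <= |y|] for [|y| <= 1], as [p >= 1] *)
  apply/cvgrPdist_lt => e e0.
  have e10 : 0 < Num.min e 1 by rewrite lt_min e0 ltr01.
  apply: filterS (@nbhs0_lt R R _ e10) => y /=; rewrite lt_min => /andP[ye y1].
  rewrite normr0 powR0 // sub0r normrN ger0_norm ?powR_ge0 //.
  have [->|y0] := eqVneq `|y| 0; first by rewrite powR0.
  apply: le_lt_trans ye; apply: ge1r_powR => //.
  by rewrite normr_gt0 -normr_eq0 y0 /= ltW.
apply: (@continuous_comp _ _ _ (@Num.Def.normr R R) (fun b : R => b `^ p)).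
  exact: norm_continuous.
apply: differentiable_continuous; apply/derivable1_diffP.
by apply: derivable_powR; rewrite in_itv /= andbT normr_gt0.
Qed.

Lemma continuous_edist (R : realType) (d : nat) (y : 'rV[R]_d) :
  continuous (fun z : 'rV[R]_d => Defs.edist z y).
Proof.
move=> x; apply: continuous_comp; last exact: sqrt_continuous.
rewrite -[X in {for x, continuous X}]fct_sumE.
apply: (@big_ind _ (fun g : 'rV[R]_d -> R => {for x, continuous g})) => //.
- exact: cst_continuous.
- by move=> f g; exact: continuousD.
move=> i _; rewrite -[X in {for x, continuous X}]/(fun z : 'rV[R]_d =>
  (z ord0 i - y ord0 i) * (z ord0 i - y ord0 i)).
have ci : {for x, continuous (fun z : 'rV[R]_d => z ord0 i - y ord0 i)}.
  by apply: continuousB; [exact: coord_continuous | exact: cst_continuous].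
exact: continuousM.
Qed.

Lemma continuous_tau (R : realType) (d : nat) (p : R) (x1 x2 : 'rV[R]_d) :
  1 <= p -> continuous (tau p x1 x2).
Proof.
move=> p1 x.
have -> : tau p x1 x2 =
    (fun z => `|Defs.edist z x1| `^ p) - (fun z => `|Defs.edist z x2| `^ p).
  apply/funext => z; have n1 : 0 <= Defs.edist z x1 := sqrtr_ge0 _.
  have n2 : 0 <= Defs.edist z x2 := sqrtr_ge0 _.
  by rewrite /tau -(ger0_norm n1) -(ger0_norm n2).
by apply: continuousB; apply: (@continuous_comp _ _ _ (fun z => Defs.edist z _)
  (fun b : R => `|b| `^ p)); [exact: continuous_edist | exact: continuous_normr_powR
  | exact: continuous_edist | exact: continuous_normr_powR].
Qed.

Lemma compact_bounded_away (R : realType) (T : topologicalType) (F : T -> R)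
    (K : set T) (c : R) :
  continuous F -> compact K -> (forall x, K x -> F x != c) ->
  exists2 del : R, 0 < del & forall x, K x -> del <= `|F x - c|.
Proof.
move=> cF cK Kc.
have cA : compact ((fun x => F x - c) @` K).
  apply: continuous_compact => //; apply: continuous_subspaceT => x.
  by apply: (continuousB (cF x)); exact: cst_continuous.
have /nbhs_ballP[e e0 He] : nbhs (0 : R) (~` ((fun x => F x - c) @` K)).
  apply: open_nbhs_nbhs; split.
    by rewrite openC; apply: compact_closed => //; exact: norm_hausdorff.
  by move=> [x Kx /eqP]; rewrite subr_eq0; apply/negP; exact: Kc.
exists (e / 2) => [|x Kx]; first by rewrite divr_gt0.
rewrite leNgt; apply/negP => Fx; apply: (He (F x - c)); last by exists x.
rewrite -ball_normE /ball_ /= sub0r normrN.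
have e0' : 0 < e := e0; lra.
Qed.

Definition threshold (R : realType) (h1 h2 : R -> R) (s : R) : R := h2 (1 - s) - h1 s.

Lemma threshold_antitone (R : realType) (h1 h2 : R -> R) :
  (forall s t, 0 <= s -> s <= t -> t <= 1 -> h1 s <= h1 t) ->
  (forall s t, 0 <= s -> s <= t -> t <= 1 -> h2 s <= h2 t) ->
  forall s t, 0 <= s -> s <= t -> t <= 1 -> threshold h1 h2 t <= threshold h1 h2 s.
Proof.
move=> h1_nd h2_nd s t s0 st t1.
have := h1_nd s t s0 st t1; have : h2 (1 - t) <= h2 (1 - s) by apply: h2_nd; lra.
rewrite /threshold; lra.
Qed.

Lemma threshold_lipschitz (R : realType) (h1 h2 : R -> R) (L1 L2 : R) :
  (forall s t, 0 <= s <= 1 -> 0 <= t <= 1 -> `|h1 s - h1 t| <= L1 * `|s - t|) ->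
  (forall s t, 0 <= s <= 1 -> 0 <= t <= 1 -> `|h2 s - h2 t| <= L2 * `|s - t|) ->
  forall s t, 0 <= s <= 1 -> 0 <= t <= 1 ->
    `|threshold h1 h2 s - threshold h1 h2 t| <= (L1 + L2) * `|s - t|.
Proof.
move=> h1L h2L s t s01 t01; have /andP[s0 s1] := s01; have /andP[t0 t1] := t01.
have h2st : `|h2 (1 - s) - h2 (1 - t)| <= L2 * `|s - t|.
  rewrite (_ : s - t = - ((1 - s) - (1 - t))); last by ring.
  by rewrite normrN; apply: h2L; apply/andP; split; lra.
have -> : threshold h1 h2 s - threshold h1 h2 t =
    (h2 (1 - s) - h2 (1 - t)) - (h1 s - h1 t).
  by rewrite /threshold; ring.
apply: le_trans (ler_normB _ _) _; rewrite mulrDl addrC lerD //; exact: h1L.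
Qed.

Section Iteration.
Variables (R : realType) (d : nat) (lam : {measure set (Rd R d) -> \bar R}).
Variables (Om : set (Rd R d)) (f : Rd R d -> R).
Hypotheses (mOm : measurable Om) (mf : measurable_fun Om f)
  (f_ge0 : forall x, Om x -> 0 <= f x)
  (f_int1 : (\int[lam]_(x in Om) (f x)%:E = 1)%E).
Variables (p : R) (x1 x2 : 'rV[R]_d) (h1 h2 : R -> R) (rho : nat -> R).
Variable psi0 : Rd R d -> R.
Hypotheses (p_ge1 : 1 <= p) (rho01 : forall j, 0 <= rho j <= 1)
  (mpsi0 : measurable_fun Om psi0) (psi0_01 : forall x, Om x -> 0 <= psi0 x <= 1).

Local Notation psi := (psi_seq lam Om f p x1 x2 h1 h2 rho psi0).
Local Notation mass := (Defs.mfun lam Om f p x1 x2).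

Definition sublevel (t : R) : set (Rd R d) := [set x | tau p x1 x2 x < t].

Definition mass_seq (j : nat) : R := Rintegral lam Om (fun x => (1 - psi j x) * f x).

Lemma psi_seqS k x : psi k.+1 x =
  rho k * psi k x + (1 - rho k) * (1 - \1_(sublevel (threshold h1 h2 (mass_seq k))) x).
Proof.
rewrite [LHS]/= indicE -/(mass_seq k) -/(threshold h1 h2 _); case: ifPn => tx.
  by rewrite mem_set // subrr mulr0 addr0.
by rewrite memNset ?subr0 ?mulr1 //=; [ring | apply/negP].
Qed.

Lemma measurable_sublevel t : measurable (sublevel t).
Proof.
apply: sub_sigma_algebra.
rewrite /sublevel (_ : [set x | _] = tau p x1 x2 @^-1` `]-oo, t[) //.
by apply: open_comp; [move=> x _; exact: continuous_tau | exact: interval_open].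
Qed.

Lemma measurable_psi_seq k : measurable_fun Om (psi k).
Proof.
elim: k => // k IH; apply: eq_measurable_fun (fun x _ => esym (psi_seqS k x)) _.
apply: measurable_funD; apply: measurable_funM => //.
apply: measurable_funB => //; exact: measurable_indic (measurable_sublevel _).
Qed.

Lemma psi_seq_in01 k x : Om x -> 0 <= psi k x <= 1.
Proof.
move=> Ox; elim: k => [|k /andP[p0 p1]]; first exact: psi0_01.
rewrite psi_seqS indicE; have /andP[r0 r1] := rho01 k.
by case: (_ \in _); rewrite /= ?subrr ?subr0 ?mulr0 ?mulr1 ?addr0; apply/andP; split; nra.
Qed.

Lemma integrable_f : lam.-integrable Om (EFin \o f).
Proof.
apply/integrableP; split; first exact/measurable_EFinP.
rewrite (eq_integral (fun x => (f x)%:E)) ?f_int1 ?ltry //.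
by move=> x /set_mem Ox /=; rewrite ger0_norm // f_ge0.
Qed.

Lemma integrable_in0f (g : Rd R d -> R) :
  measurable_fun Om g -> (forall x, Om x -> 0 <= g x <= f x) ->
  lam.-integrable Om (EFin \o g).
Proof.
move=> mg gf; apply: (le_integrable mOm _ _ integrable_f); first exact/measurable_EFinP.
move=> x /gf /andP[g0 gfx] /=; rewrite lee_fin !ger0_norm //; exact: le_trans gfx.
Qed.

Lemma Rintegral_in01 (g : Rd R d -> R) :
  measurable_fun Om g -> (forall x, Om x -> 0 <= g x <= f x) ->
  0 <= Rintegral lam Om g <= 1.
Proof.
move=> mg gf; apply/andP; split; first by apply: Rintegral_ge0 => x /gf /andP[].
have -> : 1 = Rintegral lam Om f by rewrite /Rintegral f_int1.
apply: le_Rintegral => //; [exact: integrable_in0f | exact: integrable_f |].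
by move=> x /gf /andP[].
Qed.

Lemma measurable_mass_integrand k : measurable_fun Om (fun x => (1 - psi k x) * f x).
Proof.
by apply: measurable_funM => //; apply: measurable_funB => //; exact: measurable_psi_seq.
Qed.

Lemma mass_integrand_in0f k x : Om x -> 0 <= (1 - psi k x) * f x <= f x.
Proof.
move=> Ox; have /andP[p0 p1] := psi_seq_in01 k Ox; have f0 := f_ge0 Ox.
by apply/andP; split; nra.
Qed.

Lemma measurable_sublevel_f t : measurable_fun Om (fun x => \1_(sublevel t) x * f x).
Proof. by apply: measurable_funM => //; exact: measurable_indic (measurable_sublevel _). Qed.

Lemma sublevel_f_in0f t x : Om x -> 0 <= \1_(sublevel t) x * f x <= f x.
Proof.
move=> Ox; have := f_ge0 Ox; rewrite indicE.
by case: (_ \in _); rewrite ?mul1r ?mul0r lexx => ->.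
Qed.

Lemma mass_seq_in01 k : 0 <= mass_seq k <= 1.
Proof.
exact: Rintegral_in01 (measurable_mass_integrand k) (@mass_integrand_in0f k).
Qed.

Lemma massE t : mass t = Rintegral lam Om (fun x => \1_(sublevel t) x * f x).
Proof.
rewrite /Defs.mfun Rintegral_mkcondr; apply: eq_Rintegral => x _.
by rewrite /patch indicE; case: (_ \in _); rewrite ?mul1r ?mul0r.
Qed.

Lemma mass_in01 t : 0 <= mass t <= 1.
Proof.
by rewrite massE; exact: Rintegral_in01 (measurable_sublevel_f t) (@sublevel_f_in0f t).
Qed.

Lemma le_mass s t : s <= t -> mass s <= mass t.
Proof.
move=> st; rewrite !massE; apply: le_Rintegral => //.
- exact: integrable_in0f (measurable_sublevel_f s) (@sublevel_f_in0f s).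
- exact: integrable_in0f (measurable_sublevel_f t) (@sublevel_f_in0f t).
move=> x Ox; apply: ler_wpM2r; first exact: f_ge0.
rewrite !indicE; case: (boolP (x \in sublevel s)) => //= xs.
by rewrite mem_set //; exact: lt_le_trans (set_mem xs) st.
Qed.

Lemma mass_seqS k :
  mass_seq k.+1 =
    rho k * mass_seq k + (1 - rho k) * mass (threshold h1 h2 (mass_seq k)).
Proof.
have /andP[r0 r1] := rho01 k; have r'01 : 0 <= 1 - rho k <= 1 by apply/andP; split; lra.
have scale_in0f r (u : Rd R d -> R) : 0 <= r <= 1 ->
    (forall x, Om x -> 0 <= u x <= f x) -> forall x, Om x -> 0 <= r * u x <= f x.
  move=> /andP[? ?] uf x /uf /andP[? ?]; apply/andP; split; nra.
rewrite massE /mass_seq -!RintegralZl //; last 2 first.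
- exact: integrable_in0f (measurable_sublevel_f _) (@sublevel_f_in0f _).
- exact: integrable_in0f (measurable_mass_integrand k) (@mass_integrand_in0f k).
rewrite -RintegralD //; last 2 first.
- apply: integrable_in0f; last exact: scale_in0f (@mass_integrand_in0f k).
  by apply: measurable_funM => //; exact: measurable_mass_integrand.
- apply: integrable_in0f; last exact: scale_in0f (@sublevel_f_in0f _).
  by apply: measurable_funM => //; exact: measurable_sublevel_f.
by apply: eq_Rintegral => x _; rewrite psi_seqS; ring.
Qed.

Lemma dist_psibar_psi_seqS tbar k x :
  (tau p x1 x2 x < threshold h1 h2 (mass_seq k)) = (tau p x1 x2 x < tbar) ->
  `|psi k.+1 x - psibar p x1 x2 tbar x| = rho k * `|psi k x - psibar p x1 x2 tbar x|.
Proof.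
move=> side; have /andP[r0 r1] := rho01 k.
rewrite [psi k.+1 x]/= -/(mass_seq k) -/(threshold h1 h2 _) side /psibar.
case: ifP => _; first by rewrite !subr0 normrM ger0_norm.
have -> : 1 - rho k * (1 - psi k x) - 1 = rho k * (psi k x - 1) by ring.
by rewrite normrM ger0_norm.
Qed.

Hypotheses (h1_nd : forall s t, 0 <= s -> s <= t -> t <= 1 -> h1 s <= h1 t)
  (h2_nd : forall s t, 0 <= s -> s <= t -> t <= 1 -> h2 s <= h2 t)
  (rho_div : (\sum_(0 <= j <oo) (1 - rho j)%:E = +oo)%E)
  (rho_cvg : rho @ \oo --> (1 : R)).
Variable tbar : R.
Hypothesis tbar_fixed : threshold h1 h2 (mass tbar) = tbar.

Lemma mass_seq_cvg : mass_seq @ \oo --> mass tbar.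
Proof.
apply: (relaxation_cvg rho01 rho_div rho_cvg (g := mass \o threshold h1 h2)).
- by move=> s _; exact: mass_in01.
- by move=> s t s0 st t1; apply: le_mass => //; exact: threshold_antitone.
- exact: mass_in01.
- by rewrite /= tbar_fixed.
- exact: mass_seq_in01.
- exact: mass_seqS.
Qed.

Variables (L1 L2 : R).
Hypotheses
  (h1L : forall s t, 0 <= s <= 1 -> 0 <= t <= 1 -> `|h1 s - h1 t| <= L1 * `|s - t|)
  (h2L : forall s t, 0 <= s <= 1 -> 0 <= t <= 1 -> `|h2 s - h2 t| <= L2 * `|s - t|).

Lemma threshold_mass_seq_cvg : threshold h1 h2 \o mass_seq @ \oo --> tbar.
Proof.
rewrite -[X in _ --> X]tbar_fixed.
exact: lipschitz_cvg_in01 (threshold_lipschitz h1L h2L) mass_seq_in01 (mass_in01 _)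
  mass_seq_cvg.
Qed.

Lemma psi_seq_cvg_psibar (K : set 'rV[R]_d) : compact K ->
  K `<=` Om `\` [set x | tau p x1 x2 x = tbar] -> forall eps, 0 < eps ->
  \forall j \near \oo, forall x, K x -> `|psi j x - psibar p x1 x2 tbar x| < eps.
Proof.
move=> cK KOm eps eps0.
have [del del0 Kdel] := compact_bounded_away
  (continuous_tau (x1 := x1) (x2 := x2) p_ge1) cK (fun x Kx => introN eqP (KOm x Kx).2).
have /cvgrPdist_lt /(_ _ del0) [N _ tN] := threshold_mass_seq_cvg.
have := contraction_eventually_lt rho01 rho_div N eps0; apply: filterS => j HK x Kx.
apply: (HK (fun k => `|psi k x - psibar p x1 x2 tbar x|)).
  have /andP[psiN0 psiN1] := psi_seq_in01 N (KOm x Kx).1.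
  by rewrite /psibar; case: ifP => _; rewrite ler_norml; apply/andP; split; lra.
move=> k Nk; rewrite dist_psibar_psi_seqS ?le_max ?lexx ?orbT //.
by apply: same_side_lt (Kdel x Kx); rewrite distrC; exact: tN.
Qed.

End Iteration.

Theorem theorem5p7 (R : realType) (d : nat)
    (lam : {measure set (Rd R d) -> \bar R}) (Hlam : is_lebesgue lam)
    (Om : set (Rd R d)) (mOm : measurable Om)
    (bOm : exists M : R, forall x, Om x -> forall i : 'I_d, `|x ord0 i| <= M)
    (f : Rd R d -> R) (mf : measurable_fun Om f)
    (f_ge0 : forall x, Om x -> 0 <= f x)
    (f_bd : exists M : R, forall x, Om x -> f x <= M)
    (f_int1 : (\int[lam]_(x in Om) (f x)%:E = 1)%E)
    (p : R) (p_ge1 : 1 <= p)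
    (x1 x2 : Rd R d) (x1Om : Om x1) (x2Om : Om x2)
    (h1 h2 : R -> R)
    (h1_ge0 : forall s, 0 <= s <= 1 -> 0 <= h1 s)
    (h2_ge0 : forall s, 0 <= s <= 1 -> 0 <= h2 s)
    (h1_nd : forall s t, 0 <= s -> s <= t -> t <= 1 -> h1 s <= h1 t)
    (h2_nd : forall s t, 0 <= s -> s <= t -> t <= 1 -> h2 s <= h2 t)
    (h1_lip : exists L : R, forall s t, 0 <= s <= 1 -> 0 <= t <= 1 ->
       `|h1 s - h1 t| <= L * `|s - t|)
    (h2_lip : exists L : R, forall s t, 0 <= s <= 1 -> 0 <= t <= 1 ->
       `|h2 s - h2 t| <= L * `|s - t|)
    (rho : nat -> R) (rho_01 : forall j, 0 < rho j < 1)
    (rho_cvg : rho @ \oo --> (1 : R))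
    (rho_div : (\sum_(0 <= j <oo) (1 - rho j)%:E = +oo)%E)
    (psi0 : Rd R d -> R) (mpsi0 : measurable_fun Om psi0)
    (psi0_01 : forall x, Om x -> 0 <= psi0 x <= 1)
    (tbar : R) (Htbar : Gfun lam Om f p x1 x2 h1 h2 tbar = tbar) :
  forall K : set 'rV[R]_d, compact K ->
    K `<=` Om `\` [set x | tau p x1 x2 x = tbar] ->
    forall eps : R, 0 < eps -> exists N : nat, forall j : nat, (N <= j)%N ->
      forall x, K x ->
        `|psi_seq lam Om f p x1 x2 h1 h2 rho psi0 j x - psibar p x1 x2 tbar x| < eps.
Proof.
move=> K cK KOm eps eps0.
have rho01 j : 0 <= rho j <= 1 by case/andP: (rho_01 j) => /ltW-> /ltW->.
have [L1 h1L] := h1_lip; have [L2 h2L] := h2_lip.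
have [N _ HN] := psi_seq_cvg_psibar mOm mf f_ge0 f_int1 p_ge1 rho01 mpsi0 psi0_01
  h1_nd h2_nd rho_div rho_cvg Htbar h1L h2L cK KOm eps0.
by exists N.
Qed.
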